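(* Let $E$ be a finite set, $w\geq 1$ an integer and $e\in E$. Then: (i) the map $\mathcal{R}_e:[0,\infty)^{E\setminus\{e\}}\to(0,1]$ is non-increasing in each variable; (ii) the map $\mathcal{D}:[0,\infty)^E\to[0,|E|)$ is strictly increasing in each variable; (iii) for every $\mathbf{X}\in(0,\infty)^E$ (all coordinates positive), the map $z\in[0,\infty)\mapsto z\,\mathcal{R}_e(z\mathbf{X})$ is strictly increasing, where $z\mathbf{X}$ is the vector with entries $zX_f$.
   Context: Let $E$ be a finite set and $w$ a positive integer. For $\mathbf{Y}=(Y_f)_{f\in E}\in[0,\infty)^E$ and $S\subseteq E$ write $\mathbf{Y}^S=\prod_{f\in S}Y_f$ (with $\mathbf{Y}^\emptyset=1$). For $e\in E$ define $$\mathcal{R}_e(\mathbf{Y})=\frac{\sum_{S\subseteq E\setminus\{e\},\,|S|\leq w-1}\mathbf{Y}^S}{\sum_{S\subseteq E\setminus\{e\},\,|S|\leq w}\mathbf{Y}^S},$$ which depends only on the coordinates $Y_f$, $f\neq e$, and define $$\mathcal{D}(\mathbf{Y})=\sum_{e\in E}\frac{Y_e\mathcal{R}_e(\mathbf{Y})}{1+Y_e\mathcal{R}_e(\mathbf{Y})}.$$ *)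

(* the statement is purely algebraic/order-theoretic, so we
   state it over an arbitrary real field R. *)
From HB Require Import structures.
From mathcomp Require Import all_boot all_order all_algebra.
Set Implicit Arguments. Unset Strict Implicit. Unset Printing Implicit Defensive.
Import Order.TTheory GRing.Theory Num.Theory.
Local Open Scope ring_scope.

Definition monom (R : realFieldType) (E : finType) (Y : E -> R) (S : {set E}) : R :=
  \prod_(f in S) Y f.

Definition elsum (R : realFieldType) (E : finType) (e : E) (k : nat) (Y : E -> R) : R :=
  \sum_(S : {set E} | (e \notin S) && (#|S| <= k)%N) monom Y S.

(* R_e(Y); w is a positive integer so w-1 = w.-1 *)
Definition Rfun (R : realFieldType) (E : finType) (w : nat) (e : E) (Y : E -> R) : R :=
  elsum e w.-1 Y / elsum e w Y.

Definition Dfun (R : realFieldType) (E : finType) (w : nat) (Y : E -> R) : R :=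
  \sum_(e : E) (Y e * Rfun w e Y) / (1 + Y e * Rfun w e Y).

From HB Require Import structures.
From mathcomp Require Import all_boot all_order all_algebra.
From mathcomp Require Import ring lra.
Import Order.TTheory GRing.Theory Num.Theory.
Local Open Scope ring_scope.
Set Implicit Arguments. Unset Strict Implicit.

(* Write A = E \ {e} and, for a set C and Y >= 0, let cume Y C k be the sum of
   Y^S over S subset of C with |S| < k, so that R_e = cume_w / cume_(w+1) on
   A.  Everything rests on two facts about these truncated symmetric sums:
   - adding a point x to C gives cume (x|:C) (k+1) = cume C (k+1) + Y_x cume C k,
     so as a function of one coordinate Y_f every cume is affine;
   - k |-> cume Y C k (and likewise k |-> e_(k-1)) is log-concave in the strong
     sense g_a g_(b+2) <= g_(a+1) g_(b+1) for a <= b, a property preserved by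
     the convolution g |-> g + Y_x (shifted g) (Newton-type inequality).
   (i)  Splitting off Y_f, R_e becomes y |-> (p + y q)/(r + y s), which is
        non-increasing exactly when q r <= p s: this is log-concavity.
   (ii) The identity sum_e Y_e cume (E\e) k = k cume E (k+1) - sum_(m<=k) cume E m
        gives D = w - sum_(m<=w) cume E m / cume E (w+1); each ratio is
        non-increasing in Y_f by the argument of (i), and the m = 1 term
        1 / cume E (w+1) is strictly decreasing.
   (iii) z R_e(zX) = sum_j z^j e_(j-1) / sum_j z^j e_j is a ratio of power series
        whose coefficient ratios are monotone (log-concavity again), hence it is
        strictly increasing by a Chebyshev-type double-sum argument. *)

Section Fractions.
Variable R : realFieldType.

Lemma frac_le (p q r s : R) : 0 < q -> 0 < s -> p * s <= r * q -> p / q <= r / s.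
Proof. by move=> q0 s0 h; rewrite ler_pdivrMr // mulrAC ler_pdivlMr. Qed.

Lemma frac_lt (p q r s : R) : 0 < q -> 0 < s -> p * s < r * q -> p / q < r / s.
Proof. by move=> q0 s0 h; rewrite ltr_pdivrMr // mulrAC ltr_pdivlMr. Qed.

Lemma affine_ratio_antitone (p q r s y y' : R) :
  0 < r -> 0 <= s -> q * r <= p * s -> 0 <= y -> y <= y' ->
  (p + y' * q) / (r + y' * s) <= (p + y * q) / (r + y * s).
Proof.
move=> r0 s0 qr y0 yy'.
have den z : 0 <= z -> 0 < r + z * s by move=> z0; rewrite ltr_wpDr ?mulr_ge0.
apply: frac_le; rewrite ?den ?(le_trans y0) //.
rewrite -subr_ge0 (_ : _ - _ = (y' - y) * (p * s - q * r)); last by ring.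
by apply: mulr_ge0; rewrite subr_ge0.
Qed.

Lemma frac_unit (x : R) : 0 <= x -> 0 <= x / (1 + x) < 1.
Proof.
move=> x0; have x1 : 0 < 1 + x by rewrite ltr_wpDr.
by rewrite divr_ge0 ?(ltW x1) //= ltr_pdivrMr // mul1r ltrDr.
Qed.

End Fractions.

Section LogConcave.
Variable R : realFieldType.
Implicit Types g : nat -> R.

(* Log-concavity in the strong form: the ratios g_a / g_(a+1) are
   non-decreasing (this form is stable under leading zeros such as g_0 = 0). *)
Definition logconcave g : Prop :=
  forall a b, (a <= b)%N -> g a * g b.+2 <= g a.+1 * g b.+1.

Lemma logconcave_cross g j k : logconcave g -> (j <= k)%N ->
  g j * g k.+1 <= g j.+1 * g k.
Proof.
move=> lcg; rewrite leq_eqVlt => /orP[/eqP <-|]; first by rewrite mulrC.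
by case: k => // k; rewrite ltnS => /lcg.
Qed.

Lemma logconcave_gap2 g a b : logconcave g -> (a <= b)%N ->
  g a * g b.+3 <= g a.+2 * g b.+1.
Proof.
move=> lcg; rewrite leq_eqVlt => /orP[/eqP <-|ab].
  by rewrite [g a.+2 * _]mulrC; apply: lcg.
exact: le_trans (lcg _ _ (leqW (ltnW ab))) (lcg _ _ ab).
Qed.

(* Log-concavity is preserved by g' = g + x (shifted g), x >= 0: this is how
   the symmetric sums change when one point is added to the ground set. *)
Lemma logconcave_step g g' (x : R) : 0 <= x -> (forall k, 0 <= g k) ->
  g 0%N = 0 -> g' 0%N = 0 -> (forall k, g' k.+1 = g k.+1 + x * g k) ->
  logconcave g -> logconcave g'.
Proof.
move=> x0 g_ge0 g0 g'0 g'S lcg.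
have g'_ge0 k : 0 <= g' k.
  by case: k => [|k]; rewrite ?g'0 // g'S addr_ge0 ?mulr_ge0.
case=> [|a] b ab; first by rewrite g'0 mul0r mulr_ge0.
case: b ab => // b ab; rewrite !g'S.
have h1 := lcg a.+1 b.+1 ab.
have h2 : 0 <= x * (g a.+2 * g b.+1 - g a * g b.+3).
  by rewrite mulr_ge0 // subr_ge0 logconcave_gap2.
have h3 : 0 <= (x * x) * (g a.+1 * g b.+1 - g a * g b.+2).
  by rewrite mulr_ge0 ?mulr_ge0 // subr_ge0 lcg.
lra.
Qed.

Definition gpoly g (z : R) (N : nat) : R := \sum_(j < N) z ^+ j * g j.

Lemma expr_cross (z1 z2 : R) j k : 0 <= z1 -> z1 <= z2 -> (j <= k)%N ->
  z2 ^+ j * z1 ^+ k <= z1 ^+ j * z2 ^+ k.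
Proof.
move=> z1_ge0 z12 jk; rewrite -(subnKC jk) !exprD !mulrA [z2 ^+ j * _]mulrC.
have z2_ge0 := le_trans z1_ge0 z12.
by rewrite ler_wpM2l ?mulr_ge0 ?exprn_ge0 // lerXn2r // nnegrE.
Qed.

(* Monotone likelihood ratio: for log-concave g with g_0 = 0 < g_1, the
   quotient gpoly g z / gpoly (shifted g) z is strictly increasing in z >= 0.
   The double sum of the nonnegative terms u j k equals twice the difference
   of cross products, and the term u 0 1 is positive. *)
Lemma gpoly_ratio_increasing g N (z1 z2 : R) :
  g 0%N = 0 -> 0 < g 1%N -> logconcave g -> 0 <= z1 -> z1 < z2 ->
  gpoly g z1 N.+2 * gpoly (fun j => g j.+1) z2 N.+2 <
  gpoly g z2 N.+2 * gpoly (fun j => g j.+1) z1 N.+2.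
Proof.
move=> g0 g1 lcg z1_ge0 z12.
pose t j k := g j * g k.+1 * (z2 ^+ j * z1 ^+ k - z1 ^+ j * z2 ^+ k).
pose u j k := t j k + t k j.
have u_ge0_le j k : (j <= k)%N -> 0 <= u j k.
  move=> jk; have -> : u j k = (g j * g k.+1 - g j.+1 * g k) *
    (z2 ^+ j * z1 ^+ k - z1 ^+ j * z2 ^+ k) by rewrite /u /t; ring.
  apply: mulr_le0; rewrite subr_le0; first exact: logconcave_cross.
  exact: expr_cross z1_ge0 (ltW z12) jk.
have u_ge0 j k : 0 <= u j k.
  by case: (leqP j k) => [/u_ge0_le //|/ltnW/u_ge0_le]; rewrite /u addrC.
have u01 : 0 < u 0%N 1%N.
  rewrite /u /t g0 !expr0 !expr1 !mul0r add0r.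
  have -> : g 1%N * g 1%N * (z2 * 1 - z1 * 1) = g 1%N * g 1%N * (z2 - z1) by ring.
  by rewrite !mulr_gt0 // subr_gt0.
have : 0 < \sum_(j < N.+2) \sum_(k < N.+2) u j k.
  rewrite big_ord_recl (bigD1 (Ordinal (isT : (1 < N.+2)%N))) //= -addrA.
  by rewrite ltr_pwDl // addr_ge0 ?sumr_ge0 // => j _; rewrite sumr_ge0.
have -> : \sum_(j < N.+2) \sum_(k < N.+2) u j k =
    \sum_(j < N.+2) \sum_(k < N.+2) t j k + \sum_(j < N.+2) \sum_(k < N.+2) t j k.
  rewrite [X in _ = _ + X]exchange_big -big_split /=.
  by apply: eq_bigr => j _; rewrite -big_split.
have -> : \sum_(j < N.+2) \sum_(k < N.+2) t j k =
    gpoly g z2 N.+2 * gpoly (fun j => g j.+1) z1 N.+2 -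
    gpoly g z1 N.+2 * gpoly (fun j => g j.+1) z2 N.+2.
  rewrite /gpoly !big_distrlr /= -sumrB; apply: eq_bigr => j _.
  by rewrite -sumrB; apply: eq_bigr => k _; rewrite /t; ring.
lra.
Qed.

End LogConcave.

Section SymmetricSums.
Variables (R : realFieldType) (E : finType).
Implicit Types (Y : E -> R) (A S T : {set E}) (p : pred nat).

Definition symsum Y A p : R :=
  \sum_(S : {set E} | (S \subset A) && p #|S|) monom Y S.

Definition cume Y A k : R := symsum Y A (fun n => (n < k)%N).

(* Shifted elementary symmetric sums: esh Y A k = e_(k-1), esh Y A 0 = 0. *)
Definition esh Y A k : R := symsum Y A (fun n => n.+1 == k).

Lemma subset_setU1_notin A S x : x \notin A ->
  (S \subset x |: A) && (x \notin S) = (S \subset A).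
Proof.
move=> xA; apply/andP/idP => [[/subsetP sS xS] | sA].
  apply/subsetP => y yS; move: (sS y yS); rewrite !inE => /orP[/eqP eyx|//].
  by move: xS; rewrite -eyx yS.
split; first exact: subset_trans sA (subsetU1 x A).
by apply: contra xA => /(subsetP sA).
Qed.

Lemma symsum_setU1 Y A p x : x \notin A ->
  symsum Y (x |: A) p = symsum Y A p + Y x * symsum Y A (fun n => p n.+1).
Proof.
move=> xA; rewrite /symsum (bigID (fun S : {set E} => x \in S)) /= addrC.
congr (_ + _).
  by apply: eq_bigl => S; rewrite andbAC subset_setU1_notin.
rewrite big_distrr (reindex_onto (fun T => x |: T) (fun S => S :\ x)) /=; last first.
  by move=> S /andP[_ xS]; rewrite setD1K.
apply: eq_big => T.
  have [xT | xT] := boolP (x \in T).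
    have xTD : ((x |: T) :\ x == T) = false.
      by apply/negbTE/eqP => /setP/(_ x); rewrite !inE eqxx xT.
    have nTA : (T \subset A) = false.
      by apply/negbTE; apply: contra xA => /subsetP; apply.
    by rewrite xTD nTA !andbF.
  rewrite setU1K // eqxx setU11 !andbT cardsU1 xT add1n.
  by rewrite subUset sub1set setU11 -(subset_setU1_notin T xA) xT andbT.
by case/andP=> _ /eqP <-; rewrite /monom big_setU1 //= !inE eqxx.
Qed.

Lemma symsum_set0 Y p : symsum Y set0 p = (p 0%N)%:R.
Proof.
rewrite /symsum (eq_bigl (fun S : {set E} => (S == set0) && p 0%N)); last first.
  by move=> S; rewrite subset0; case: eqP => // ->; rewrite cards0.
case: (p 0%N); last by rewrite big_pred0 // => S; rewrite andbF.
by rewrite (big_pred1 set0) /monom ?big_set0 // => S; rewrite andbT.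
Qed.

Lemma finset_ind (P : {set E} -> Prop) :
  P set0 -> (forall x A, x \notin A -> P A -> P (x |: A)) -> forall A, P A.
Proof.
move=> P0 PU1 A; elim: {A}#|A| {-2}A (erefl #|A|) => [|n IH] A cardA.
  by rewrite (cards0_eq cardA).
have [x xA] : {x | x \in A} by apply/sigW/set0Pn; rewrite -card_gt0 cardA.
rewrite -(setD1K xA); apply: PU1; first by rewrite setD11.
by apply: IH; move: cardA; rewrite (cardsD1 x) xA add1n => -[].
Qed.

Lemma cume_setU1 Y A x k : x \notin A ->
  cume Y (x |: A) k.+1 = cume Y A k.+1 + Y x * cume Y A k.
Proof. exact: symsum_setU1. Qed.

Lemma esh_setU1 Y A x k : x \notin A ->
  esh Y (x |: A) k.+1 = esh Y A k.+1 + Y x * esh Y A k.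
Proof. exact: symsum_setU1. Qed.

Lemma symsum_pred0 Y A p : (forall n, ~~ p n) -> symsum Y A p = 0.
Proof.
by move=> p0; rewrite /symsum big_pred0 // => S; rewrite (negbTE (p0 _)) andbF.
Qed.

Lemma cume0 Y A : cume Y A 0 = 0.
Proof. exact: symsum_pred0. Qed.

Lemma esh0 Y A : esh Y A 0 = 0.
Proof. exact: symsum_pred0. Qed.

Lemma cume1 Y A : cume Y A 1 = 1.
Proof.
elim/finset_ind: A => [|x A xA IH]; first by rewrite /cume symsum_set0.
by rewrite cume_setU1 // IH cume0 mulr0 addr0.
Qed.

Lemma esh1 Y A : esh Y A 1 = 1.
Proof.
elim/finset_ind: A => [|x A xA IH]; first by rewrite /esh symsum_set0.
by rewrite esh_setU1 // IH esh0 mulr0 addr0.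
Qed.

Section Nonneg.
Variable Y : E -> R.
Hypothesis Y_ge0 : forall g, 0 <= Y g.

Lemma symsum_ge0 A p : 0 <= symsum Y A p.
Proof. by apply: sumr_ge0 => S _; apply: prodr_ge0. Qed.

Lemma symsum_mono A (p q : pred nat) :
  (forall n, p n -> q n) -> symsum Y A p <= symsum Y A q.
Proof.
move=> pq; rewrite [symsum Y A q](bigID (fun S : {set E} => p #|S|)) /=.
have -> : \sum_(S : {set E} | ((S \subset A) && q #|S|) && p #|S|) monom Y S =
          symsum Y A p.
  by apply: eq_bigl => S; case: (boolP (p _)) => [/pq->|]; rewrite ?andbT ?andbF.
by rewrite lerDl sumr_ge0 // => S _; apply: prodr_ge0.
Qed.

Lemma cume_mono A i j : (i <= j)%N -> cume Y A i <= cume Y A j.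
Proof. by move=> ij; apply: symsum_mono => n /leq_trans; apply. Qed.

Lemma cume_ge1 A k : 1 <= cume Y A k.+1.
Proof. by rewrite -(cume1 Y A) cume_mono. Qed.

Lemma cume_gt0 A k : 0 < cume Y A k.+1.
Proof. exact: lt_le_trans ltr01 (cume_ge1 A k). Qed.

End Nonneg.

Lemma symsum_eq Y Y' A p : {in A, Y' =1 Y} -> symsum Y' A p = symsum Y A p.
Proof.
move=> YY'; apply: eq_bigr => S /andP[/subsetP sS _].
by apply: eq_bigr => g /sS; apply: YY'.
Qed.

Lemma cume_logconcave Y A : (forall g, 0 <= Y g) -> logconcave (cume Y A).
Proof.
move=> Y_ge0; elim/finset_ind: A => [|x A xA IH].
  by move=> a b _; rewrite /cume !symsum_set0 /= !mulr1 ler_nat leq_b1.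
apply: (logconcave_step (g := cume Y A) (Y_ge0 x) _ (cume0 _ _) (cume0 _ _) _ IH).
  by move=> k; apply: symsum_ge0.
by move=> k; rewrite cume_setU1.
Qed.

Lemma esh_logconcave Y A : (forall g, 0 <= Y g) -> logconcave (esh Y A).
Proof.
move=> Y_ge0; elim/finset_ind: A => [|x A xA IH].
  by move=> a b _; rewrite /esh !symsum_set0 /= mulr0 mulr_ge0 ?ler0n.
apply: (logconcave_step (g := esh Y A) (Y_ge0 x) _ (esh0 _ _) (esh0 _ _) _ IH).
  by move=> k; apply: symsum_ge0.
by move=> k; rewrite esh_setU1.
Qed.

Lemma cume_split_at Y (Z : E -> R) A f k : f \in A -> {in A :\ f, Z =1 Y} ->
  cume Z A k.+1 = cume Y (A :\ f) k.+1 + Z f * cume Y (A :\ f) k.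
Proof.
move=> fA ZY; rewrite -{1}(setD1K fA) cume_setU1 ?setD11 //.
by rewrite /cume !(symsum_eq _ ZY).
Qed.

End SymmetricSums.

Section OneCoordinate.
Variables (R : realFieldType) (E : finType) (Y Y' : E -> R) (f : E).
Implicit Type C : {set E}.
Hypothesis Y_ge0 : forall g, 0 <= Y g.
Hypothesis Y'_eq : forall g, g != f -> Y' g = Y g.

Let Y'_eq_in C : {in C :\ f, Y' =1 Y}.
Proof. by move=> g; rewrite !inE => /andP[/Y'_eq]. Qed.

(* Raising Y_f lowers cume C (m+1) / cume C (k+2) for m <= k; the condition
   q r <= p s of affine_ratio_antitone is log-concavity of cume on C \ f. *)
Lemma cume_ratio_antitone C m k : f \in C -> Y f <= Y' f -> (m <= k)%N ->
  cume Y' C m.+1 / cume Y' C k.+2 <= cume Y C m.+1 / cume Y C k.+2.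
Proof.
move=> fC Yf mk.
rewrite !(cume_split_at _ fC (@Y'_eq_in C)) !(cume_split_at _ fC (in1W (frefl Y))).
apply: affine_ratio_antitone; rewrite ?cume_gt0 ?symsum_ge0 //.
exact: cume_logconcave.
Qed.

(* Raising Y_f strictly raises cume C (k+2), whose Y_f-coefficient is >= 1. *)
Lemma cume_strict C k : f \in C -> Y f < Y' f -> cume Y C k.+2 < cume Y' C k.+2.
Proof.
move=> fC Yf.
rewrite !(cume_split_at _ fC (@Y'_eq_in C)) !(cume_split_at _ fC (in1W (frefl Y))).
by rewrite ltrD2l ltr_pM2r ?cume_gt0.
Qed.

End OneCoordinate.

Section RatioFunctions.
Variables (R : realFieldType) (E : finType).
Implicit Types (Y : E -> R) (A : {set E}).

Lemma elsum_cume Y (e : E) k : elsum e k Y = cume Y [set~ e] k.+1.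
Proof.
by apply: eq_bigl => S; rewrite subsetC sub1set !inE andbC.
Qed.

Lemma Rfun_cume Y (e : E) n :
  Rfun n.+1 e Y = cume Y [set~ e] n.+1 / cume Y [set~ e] n.+2.
Proof. by rewrite /Rfun !elsum_cume. Qed.

Lemma setT_minus (e : E) : [set: E] :\ e = [set~ e].
Proof. by rewrite setDE setTI. Qed.

Lemma Rfun_bounds Y (e : E) n : (forall g, 0 <= Y g) ->
  0 < Rfun n.+1 e Y /\ Rfun n.+1 e Y <= 1.
Proof.
move=> Y_ge0; rewrite Rfun_cume divr_gt0 ?cume_gt0 //.
by split=> //; rewrite ler_pdivrMr ?cume_gt0 // mul1r cume_mono.
Qed.

Lemma Rfun_antitone Y Y' (e f : E) n : f != e -> (forall g, 0 <= Y g) ->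
  (forall g, g != f -> Y' g = Y g) -> Y f <= Y' f ->
  Rfun n.+1 e Y' <= Rfun n.+1 e Y.
Proof.
move=> fe Y_ge0 Y'_eq Yf; rewrite !Rfun_cume.
by apply: cume_ratio_antitone Yf (leqnn n); rewrite ?inE.
Qed.

Lemma Dfun_term Y (e : E) n : (forall g, 0 <= Y g) ->
  Y e * Rfun n.+1 e Y / (1 + Y e * Rfun n.+1 e Y) =
  Y e * cume Y [set~ e] n.+1 / cume Y [set: E] n.+2.
Proof.
move=> Y_ge0; rewrite Rfun_cume (cume_split_at _ (in_setT e) (in1W (frefl Y))).
rewrite setT_minus; set a := cume Y _ n.+1; set b := cume Y _ n.+2.
have b_gt0 : 0 < b by apply: cume_gt0.
have ab_gt0 : 0 < b + Y e * a by rewrite ltr_wpDr ?mulr_ge0 ?symsum_ge0.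
by field; rewrite !lt0r_neq0.
Qed.

(* sum_(e in A) Y_e cume (A\e) k, which counts each Y^T (|T| <= k) |T| times. *)
Definition extsum Y A k : R := \sum_(e in A) Y e * cume Y (A :\ e) k.

Lemma extsum_set0 Y k :
  extsum Y set0 k = k%:R * cume Y set0 k.+1 - \sum_(m < k.+1) cume Y set0 m.
Proof.
rewrite /extsum big_set0 big_ord_recl /cume !symsum_set0 /= add0r.
by under eq_bigr do rewrite symsum_set0; rewrite sumr_const card_ord mulr1 subrr.
Qed.

Lemma extsum_setU1 Y A x k : x \notin A ->
  extsum Y (x |: A) k.+1 =
  Y x * cume Y A k.+1 + extsum Y A k.+1 + Y x * extsum Y A k.
Proof.
move=> xA; rewrite /extsum big_setU1 //= setU1K // -addrA.
rewrite [Y x * \sum_(e in A) _]big_distrr -big_split /=.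
congr (_ + _); apply: eq_bigr => e eA.
have xAe : x \notin A :\ e by rewrite !inE negb_and xA orbT.
have -> : (x |: A) :\ e = x |: (A :\ e).
  rewrite setDUl (setDidPl _) // disjoint_sym disjoints1 !inE.
  by apply: contraNneq xA => <-.
by rewrite cume_setU1 //; ring.
Qed.

Lemma extsum_closed Y A k :
  extsum Y A k = k%:R * cume Y A k.+1 - \sum_(m < k.+1) cume Y A m.
Proof.
elim/finset_ind: A k => [|x A xA IH] k; first exact: extsum_set0.
case: k => [|k].
  by rewrite /extsum big1 => [|e _]; rewrite ?big_ord1 ?cume0 ?mulr0 ?mul0r ?subr0.
rewrite extsum_setU1 // !IH big_ord_recl [in RHS]big_ord_recl !cume0 !add0r.
under [in RHS]eq_bigr do rewrite cume_setU1 //.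
rewrite big_split /= -big_distrr /= cume_setU1 // -natr1.
ring.
Qed.

Lemma Dfun_closed Y n : (forall g, 0 <= Y g) ->
  Dfun n.+1 Y = n.+1%:R - \sum_(m < n.+2) cume Y [set: E] m / cume Y [set: E] n.+2.
Proof.
move=> Y_ge0; rewrite /Dfun; under eq_bigr do rewrite Dfun_term //.
rewrite -mulr_suml (_ : \sum_(e : E) _ = extsum Y [set: E] n.+1); last first.
  by apply: eq_big => [e|e _]; rewrite ?in_setT ?setT_minus.
rewrite extsum_closed mulrBl -mulr_suml mulfK //.
exact: lt0r_neq0 (cume_gt0 Y_ge0 _ _).
Qed.

Lemma Dfun_bounds Y n (e : E) : (forall g, 0 <= Y g) ->
  0 <= Dfun n.+1 Y /\ Dfun n.+1 Y < #|E|%:R.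
Proof.
move=> Y_ge0.
have term01 g : 0 <= Y g * Rfun n.+1 g Y / (1 + Y g * Rfun n.+1 g Y) < 1.
  have [Rfun_gt0 _] := Rfun_bounds g n Y_ge0.
  exact: frac_unit (mulr_ge0 (Y_ge0 g) (ltW Rfun_gt0)).
split; first by apply: sumr_ge0 => g _; case/andP: (term01 g).
rewrite -[#|E|%:R]sumr_const /Dfun (bigD1 e) // [X in _ < X](bigD1 e) //=.
rewrite ltr_leD //; first by case/andP: (term01 e).
by apply: ler_sum => g _; case/andP: (term01 g) => _ /ltW.
Qed.

(* Part (ii), monotonicity: in the closed form the m = 0 term vanishes, the
   m = 1 term 1 / cume E (w+1) strictly decreases, the others do not increase. *)
Lemma Dfun_strict Y Y' n (f : E) : (forall g, 0 <= Y g) -> (forall g, 0 <= Y' g) ->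
  (forall g, g != f -> Y' g = Y g) -> Y f < Y' f -> Dfun n.+1 Y < Dfun n.+1 Y'.
Proof.
move=> Y_ge0 Y'_ge0 Y'_eq Yf; rewrite !Dfun_closed // ltrD2l ltrN2.
rewrite big_ord_recl [X in _ < X]big_ord_recl !cume0 !mul0r !add0r.
rewrite big_ord_recl [X in _ < X]big_ord_recl !cume1 !div1r.
apply: ltr_leD.
  by rewrite ltf_pV2 ?posrE ?cume_gt0 //; apply: cume_strict (in_setT f) _.
apply: ler_sum => m _; rewrite /bump /=.
exact: cume_ratio_antitone (in_setT f) (ltW Yf) (ltn_ord m).
Qed.

End RatioFunctions.

Section Scaling.
Variables (R : realFieldType) (E : finType).
Implicit Types (X : E -> R) (A : {set E}).

Lemma cume_by_degree X A k :
  cume X A k = \sum_(j < k) symsum X A (fun n => n == j).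
Proof.
elim: k => [|k IH]; first by rewrite big_ord0 cume0.
rewrite big_ord_recr -IH /cume /symsum (bigID (fun S : {set E} => (#|S| < k)%N)) /=.
congr (_ + _); apply: eq_bigl => S; rewrite -andbA; congr (_ && _).
  by rewrite andb_idl // => /ltnW.
by rewrite ltnS -leqNgt -eqn_leq.
Qed.

Lemma cume_scale X (z : R) A k :
  cume (fun g => z * X g) A k = gpoly (fun j => esh X A j.+1) z k.
Proof.
rewrite cume_by_degree; apply: eq_bigr => j _.
rewrite /esh /symsum big_distrr; apply: eq_big => // S /andP[_ /eqP <-].
by rewrite /monom big_split prodr_const.
Qed.

Lemma scaled_Rfun_gpoly X (z : R) (e : E) n :
  z * Rfun n.+1 e (fun g => z * X g) =
  gpoly (esh X [set~ e]) z n.+2 / gpoly (fun j => esh X [set~ e] j.+1) z n.+2.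
Proof.
rewrite Rfun_cume !cume_scale mulrA; congr (_ / _).
rewrite /gpoly [RHS]big_ord_recl esh0 mulr0 add0r big_distrr.
by apply: eq_bigr => j _; rewrite /= exprS mulrA.
Qed.

Lemma scaled_Rfun_increasing X (e : E) n (z1 z2 : R) : (forall g, 0 < X g) ->
  0 <= z1 -> z1 < z2 ->
  z1 * Rfun n.+1 e (fun g => z1 * X g) < z2 * Rfun n.+1 e (fun g => z2 * X g).
Proof.
move=> X_gt0 z1_ge0 z12.
have X_ge0 g : 0 <= X g by apply: ltW.
have den_gt0 z : 0 <= z -> 0 < gpoly (fun j => esh X [set~ e] j.+1) z n.+2.
  by move=> z_ge0; rewrite -cume_scale cume_gt0 // => g; rewrite mulr_ge0.
rewrite !scaled_Rfun_gpoly frac_lt ?den_gt0 ?(le_trans z1_ge0 (ltW z12)) //.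
apply: gpoly_ratio_increasing; rewrite ?esh0 ?esh1 ?ltr01 //.
exact: esh_logconcave.
Qed.

End Scaling.

Theorem proposition1 (R : realFieldType) (E : finType) (w : nat) (e : E) :
  (0 < w)%N ->
  ((forall Y : E -> R, (forall g, 0 <= Y g) ->
      0 < Rfun w e Y /\ Rfun w e Y <= 1) /\
   (forall (Y Y' : E -> R) (f : E), f != e ->
      (forall g, 0 <= Y g) -> (forall g, 0 <= Y' g) ->
      (forall g, g != f -> Y' g = Y g) -> Y f <= Y' f ->
      Rfun w e Y' <= Rfun w e Y)) /\
  ((forall Y : E -> R, (forall g, 0 <= Y g) ->
      0 <= Dfun w Y /\ Dfun w Y < #|E|%:R) /\
   (forall (Y Y' : E -> R) (f : E),
      (forall g, 0 <= Y g) -> (forall g, 0 <= Y' g) ->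
      (forall g, g != f -> Y' g = Y g) -> Y f < Y' f ->
      Dfun w Y < Dfun w Y')) /\
  (forall X : E -> R, (forall g, 0 < X g) ->
     forall z1 z2 : R, 0 <= z1 -> z1 < z2 ->
       z1 * Rfun w e (fun g => z1 * X g) < z2 * Rfun w e (fun g => z2 * X g)).
Proof.
case: w => // n _.
split; [split | split; [split |]].
- by move=> Y; apply: Rfun_bounds.
- by move=> Y Y' f fe Y_ge0 _; apply: Rfun_antitone.
- by move=> Y; apply: Dfun_bounds.
- by move=> Y Y' f; apply: Dfun_strict.
- by move=> X X_gt0 z1 z2; apply: scaled_Rfun_increasing.
Qed.
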